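(* Let $C>4$ be a constant. Then every Nash equilibrium graph $G$ of the sum network creation game with $n$ players and $\alpha<n/C$ is $(5,\epsilon)$-distance-almost-uniform for $\epsilon=\frac45\left(1+\frac1C\right)$.
   Context: Sum network creation game: players $V=\{1,\dots,n\}$, parameter $\alpha>0$; a strategy of $u$ is $s_u\subseteq V\setminus\{u\}$; $G_s$ has an edge $uv$ whenever $v\in s_u$ or $u\in s_v$; the cost of $u$ is $\alpha|s_u|+\sum_{v\ne u}d_{G_s}(u,v)$. A Nash equilibrium graph is $G_s$ for $s$ from which no player can strictly lower his cost unilaterally. For a graph $G$ on $n$ vertices and $v\in V(G)$, $A_s(v)$ is the set of vertices at distance exactly $s$ from $v$. $G$ is $(k,\epsilon)$-distance-almost-uniform if there exists $r$ such that $\max_{i=0}^{k-1}|A_{r+i}(u)|\ge n(1-\epsilon)$ for all $u\in V(G)$. *)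

From mathcomp Require Import all_boot all_order all_algebra.
From mathcomp Require Import reals.
Set Implicit Arguments. Unset Strict Implicit. Unset Printing Implicit Defensive.
Import Order.TTheory GRing.Theory Num.Theory.
Local Open Scope ring_scope.

(* Players are 'I_n (standing for {1,...,n}).  A strategy profile assigns to
   every player u a set s u of players (u must not belong to s u). *)
Definition profile (n : nat) := 'I_n -> {set 'I_n}.

Definition valid_profile n (s : profile n) : Prop := forall u, u \notin s u.

Definition Gs n (s : profile n) : rel 'I_n :=
  fun u v => (v \in s u) || (u \in s v).

Fixpoint ball n (e : rel 'I_n) (k : nat) (u : 'I_n) : {set 'I_n} :=
  match k with
  | 0 => [set u]
  | k'.+1 => ball e k' u :|: [set v | [exists w in ball e k' u, e w v]]
  end.

(* Graph distance: Some d (the least d with v in the ball of radius d),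
   or None (= infinity) if v is not reachable from u.  Radii < n suffice. *)
Definition gdist n (e : rel 'I_n) (u v : 'I_n) : option nat :=
  let k := find (fun k => v \in ball e k u) (iota 0 n) in
  if (k < n)%N then Some k else None.

Definition Aset n (e : rel 'I_n) (k : nat) (u : 'I_n) : {set 'I_n} :=
  [set v | gdist e u v == Some k].

(* Cost of player u: alpha |s_u| + sum_{v <> u} d(u,v);
   None encodes +infinity (some player unreachable). *)
Definition cost (R : realType) n (alpha : R) (s : profile n) (u : 'I_n)
  : option R :=
  if [forall v, gdist (Gs s) u v != None] then
    Some (alpha * #|s u|%:R +
          \sum_(v < n | v != u) (odflt 0%N (gdist (Gs s) u v))%:R)
  else None.

Definition strictly_lower (R : realType) (c' c : option R) : bool :=
  match c', c with
  | Some a, Some b => a < b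
  | Some _, None => true
  | None, _ => false
  end.

Definition deviate n (s : profile n) (u : 'I_n) (t : {set 'I_n}) : profile n :=
  fun w => if w == u then t else s w.

Definition nash_eq (R : realType) n (alpha : R) (s : profile n) : Prop :=
  forall (u : 'I_n) (t : {set 'I_n}), u \notin t ->
    ~~ strictly_lower (cost alpha (deviate s u t) u) (cost alpha s u).

Definition dist_almost_uniform (R : realType) n (e : rel 'I_n) (k : nat)
  (eps : R) : Prop :=
  exists r : nat, forall u : 'I_n,
    n%:R * (1 - eps) <= (\max_(i < k) #|Aset e (r + i) u|)%N%:R.

From mathcomp Require Import all_boot all_order all_algebra.
From mathcomp Require Import reals.
From mathcomp Require Import zify ring lra.
Import Order.TTheory GRing.Theory Num.Theory.
Set Implicit Arguments. Unset Strict Implicit. Unset Printing Implicit Defensive.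

(* Buying the edge uw shortens the distance from u to every vertex x with
   d(w,x) + 2 <= d(u,x), so in an equilibrium there are at most alpha such x;
   hence |d(u,x) - d(w,x)| <= 1 for all but 2 alpha vertices x.  Double counting
   over a fixed vertex x0 yields a vertex z with |d(z,y) - d(z,x0)| <= 1 for all
   but 2 alpha vertices y.  For any u, all but 4 alpha < 4n/C vertices y then
   satisfy |d(u,y) - d(z,x0)| <= 2, i.e. lie in the five layers A_r(u), ...,
   A_(r+4)(u) with r = d(z,x0) - 2, and one of these layers has at least
   (n - 4 alpha)/5 vertices. *)

Lemma card_set_sum (T : finType) (b : pred T) :
  #|[set x | b x]| = (\sum_x (b x : nat))%N.
Proof. by rewrite -sum1dep_card big_mkcond; apply: eq_bigr => x _; case: (b x). Qed.

Lemma leq_card_bigcup (T I : finType) (A : I -> {set T}) :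
  (#|\bigcup_i A i| <= \sum_i #|A i|)%N.
Proof.
apply: (big_ind2 (fun (B : {set T}) m => #|B| <= m)%N) => [|B m B' m' hB hB'|//].
- by rewrite cards0.
- by rewrite (leq_trans (leq_card_setU B B')) ?leq_add.
Qed.

Section Balls.
Variable n : nat.
Implicit Types (e : rel 'I_n) (u v w x : 'I_n).

Lemma mem_ball0 e u : u \in ball e 0 u.
Proof. by rewrite /= inE. Qed.

Lemma mem_ball1 e u v : e u v -> v \in ball e 1 u.
Proof.
move=> uv; rewrite /= !inE; apply/orP; right.
by apply/existsP; exists u; rewrite inE eqxx.
Qed.

Lemma ball_add e a b u w x :
  w \in ball e a u -> x \in ball e b w -> x \in ball e (a + b) u.
Proof.
move=> wa; elim: b x => [|b IH] x /=.
  by rewrite inE addn0 => /eqP ->.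
rewrite addnS /= inE => /orP [/IH xa|].
  by rewrite inE xa.
rewrite inE => /existsP [y /andP [yb yx]].
by rewrite !inE; apply/orP; right; apply/existsP; exists y; rewrite IH.
Qed.

Lemma ball_sym e : symmetric e -> forall k u v,
  v \in ball e k u -> u \in ball e k v.
Proof.
move=> esym; elim=> [|k IH] u v /=.
  by rewrite !inE eq_sym.
rewrite !inE => /orP [/IH -> //|/existsP [w /andP [wk wv]]].
rewrite esym in wv.
have := ball_add (mem_ball1 wv) (IH _ _ wk).
by rewrite add1n /= !inE; apply.
Qed.

Lemma subset_ball e e' : subrel e e' -> forall k u, ball e k u \subset ball e' k u.
Proof.
move=> ee'; elim=> [|k IH] u //=.
apply/subsetP => x; rewrite !inE => /orP [xk|/existsP [y /andP [yk yx]]].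
  by rewrite (subsetP (IH u) _ xk).
by apply/orP; right; apply/existsP; exists y; rewrite (subsetP (IH u) _ yk) ee'.
Qed.

Lemma gdist_leq e k u v : (k < n)%N -> v \in ball e k u ->
  exists2 j, gdist e u v = Some j & (j <= k)%N.
Proof.
move=> kn vk; rewrite /gdist; set p := fun k => v \in ball e k u.
have find_le : (find p (iota 0 n) <= k)%N.
  rewrite leqNgt; apply/negP => /(before_find 0%N).
  by rewrite nth_iota // add0n /p vk.
by rewrite (leq_ltn_trans find_le kn); exists (find p (iota 0 n)).
Qed.

Lemma gdist_SomeP e u v j :
  gdist e u v = Some j -> v \in ball e j u /\ (j < n)%N.
Proof.
rewrite /gdist; set p := fun k => v \in ball e k u.
case: ifP => // find_lt [<-]; split => //.
have : has p (iota 0 n) by rewrite has_find size_iota.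
by move=> /(nth_find 0%N); rewrite nth_iota.
Qed.

Lemma gdist_self e u : gdist e u u = Some 0%N.
Proof.
have [j -> ] := gdist_leq (leq_ltn_trans (leq0n u) (ltn_ord u)) (mem_ball0 e u).
by rewrite leqn0 => /eqP ->.
Qed.

Lemma gdist_sym e : symmetric e -> forall u v, gdist e u v = gdist e v u.
Proof.
move=> esym u v; rewrite /gdist.
rewrite (@eq_find _ _ (fun k => u \in ball e k v)) // => k.
by apply/idP/idP; apply: ball_sym.
Qed.

Lemma gdist_shortcut e e' u w x j k : subrel e e' -> e' u w ->
  gdist e u x = Some j -> gdist e w x = Some k ->
  exists2 j', gdist e' u x = Some j' & (j' <= minn j k.+1)%N.
Proof.
move=> ee' uw /gdist_SomeP [xj jn] /gdist_SomeP [xk _].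
have xj' := subsetP (subset_ball ee' j u) x xj.
have xk' := ball_add (mem_ball1 uw) (subsetP (subset_ball ee' k w) x xk).
case: (leqP j k.+1) => [_|kj].
- exact: gdist_leq jn xj'.
- exact: gdist_leq (ltn_trans kj jn) xk'.
Qed.

Lemma leq_card_layers e k r u :
  (#|\bigcup_(i < k) Aset e (r + i) u| <= k * \max_(i < k) #|Aset e (r + i) u|)%N.
Proof.
apply: leq_trans (leq_card_bigcup _) _.
rewrite -[X in (X * _)%N]card_ord -sum_nat_const.
by apply: leq_sum => i _; apply: leq_bigmax.
Qed.

End Balls.

Lemma Gs_sym n (s : profile n) : symmetric (Gs s).
Proof. by move=> a b; rewrite /Gs orbC. Qed.

Lemma subrel_Gs_deviate n (s : profile n) u (t : {set 'I_n}) :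
  s u \subset t -> subrel (Gs s) (Gs (deviate s u t)).
Proof.
move=> sut a b; have sub c : s c \subset deviate s u t c.
  by rewrite /deviate; case: eqP => [->|_] //; apply: subxx.
by rewrite /Gs => /orP [ab|ba]; apply/orP; [left|right]; apply: (subsetP (sub _)).
Qed.

Lemma Gs_deviate_mem n (s : profile n) u (t : {set 'I_n}) w :
  w \in t -> Gs (deviate s u t) u w.
Proof. by move=> wt; rewrite /Gs /deviate eqxx wt. Qed.

Local Open Scope ring_scope.

Lemma exists_column_card_le (T : finType) (R : numDomainType)
    (P : T -> T -> bool) (c : R) (x0 : T) :
  (forall y, #|[set z | P y z]|%:R <= c) ->
  exists z, #|[set y | P y z]|%:R <= c.
Proof.
move=> row_le.
have [z _ z_min] := arg_minnP (fun z => #|[set y | P y z]|) (erefl : predT x0).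
exists z.
have col_sum : (#|T| * #|[set y | P y z]| <= \sum_z' #|[set y | P y z']|)%N.
  by rewrite -sum_nat_const; apply: leq_sum => z' _; apply: z_min.
have swap : (\sum_z' #|[set y | P y z']| = \sum_y #|[set z' | P y z']|)%N.
  under eq_bigr do rewrite card_set_sum.
  by rewrite exchange_big; apply: eq_bigr => y _; rewrite card_set_sum.
have row_sum : (\sum_y #|[set z' | P y z']|)%:R <= #|T|%:R * c.
  by rewrite natr_sum -sum1_card natr_sum mulr_suml ler_sum // => y _; rewrite mul1r.
have T_gt0 : (0 < #|T|)%N by apply/card_gt0P; exists x0.
move: col_sum; rewrite swap -(ler_nat R) natrM => /le_trans/(_ row_sum).
by rewrite ler_pM2l // ltr0n.
Qed.

Lemma cost_connected (R : realType) n (alpha : R) (s : profile n) u :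
  (forall v, gdist (Gs s) u v != None) ->
  cost alpha s u = Some (alpha * #|s u|%:R +
    \sum_(v < n | v != u) (odflt 0%N (gdist (Gs s) u v))%:R).
Proof. by move=> /forallP conn; rewrite /cost conn. Qed.

Lemma cost_disconnected (R : realType) n (alpha : R) (s : profile n) u v :
  gdist (Gs s) u v = None -> cost alpha s u = None.
Proof. by move=> uv; rewrite /cost; case: forallP => // /(_ v); rewrite uv. Qed.

Section NashEquilibrium.
Variables (R : realType) (n : nat) (alpha : R) (s : profile n).
Hypotheses (hs : valid_profile s) (hNE : nash_eq alpha s) (halpha : 0 < alpha).

Lemma nash_connected u v : gdist (Gs s) u v != None.
Proof.
apply/negP => /eqP uv_inf.
set t := ~: [set u].
have ut : u \notin t by rewrite !inE eqxx.
have := hNE ut; rewrite (cost_disconnected alpha uv_inf).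
rewrite (cost_connected alpha (s := deviate s u t)) //.
move=> w; have [->|wu] := eqVneq w u; first by rewrite gdist_self.
have n_gt1 : (1 < n)%N.
  by move: (ltn_ord u) (ltn_ord w) wu; rewrite -val_eqE /=; lia.
have wt : w \in t by rewrite !inE.
by have [j -> _] := gdist_leq n_gt1 (mem_ball1 (Gs_deviate_mem s u wt)).
Qed.

Definition dist u v := odflt 0%N (gdist (Gs s) u v).

Lemma gdist_dist u v : gdist (Gs s) u v = Some (dist u v).
Proof. by rewrite /dist; have := nash_connected u v; case: gdist. Qed.

Lemma dist_sym u v : dist u v = dist v u.
Proof. by rewrite /dist gdist_sym //; apply: Gs_sym. Qed.

Lemma dist_self u : dist u u = 0%N.
Proof. by rewrite /dist gdist_self. Qed.

Lemma nash_cost_le u (t : {set 'I_n}) : u \notin t ->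
  (forall v, gdist (Gs (deviate s u t)) u v != None) ->
  alpha * #|s u|%:R + \sum_(v < n | v != u) (dist u v)%:R <=
  alpha * #|t|%:R +
    \sum_(v < n | v != u) (odflt 0%N (gdist (Gs (deviate s u t)) u v))%:R.
Proof.
move=> ut t_conn; have := hNE ut.
rewrite (cost_connected alpha t_conn) (cost_connected alpha (@nash_connected u)).
rewrite /= -leNgt.
by have -> : deviate s u t u = t by rewrite /deviate eqxx.
Qed.

Lemma card_shortcut_le u w : u != w ->
  #|[set x | (dist w x + 2 <= dist u x)%N]|%:R <= alpha.
Proof.
move=> uw; set t := w |: s u.
have ut : u \notin t by rewrite !inE negb_or uw hs.
have shortcut x : exists2 j, gdist (Gs (deviate s u t)) u x = Some j &
    (j + (dist w x + 2 <= dist u x) <= dist u x)%N.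
  have [j -> j_le] := gdist_shortcut (subrel_Gs_deviate (subsetU1 _ _))
    (Gs_deviate_mem s u (setU11 _ _)) (gdist_dist u x) (gdist_dist w x).
  by exists j => //; case: (leqP (dist w x + 2) (dist u x)) => /= wx_le; lia.
have t_conn v : gdist (Gs (deviate s u t)) u v != None.
  by have [j -> _] := shortcut v.
have sum_le : (\sum_(v < n | v != u) odflt 0%N (gdist (Gs (deviate s u t)) u v)
    + #|[set x | (dist w x + 2 <= dist u x)%N]|
    <= \sum_(v < n | v != u) dist u v)%N.
  rewrite card_set_sum [X in (_ + X <= _)%N](bigD1 u) //= dist_self addn2 ltn0.
  rewrite /= add0n -big_split /=.
  by apply: leq_sum => v _; have [j -> ] := shortcut v.
have card_t : (#|t| <= #|s u| + 1)%N by rewrite cardsU1 addnC leq_add2l leq_b1.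
move: sum_le card_t; rewrite -!(ler_nat R) natrD !natr_sum natrD => sum_le card_t.
have := nash_cost_le ut t_conn.
have : alpha * #|t|%:R <= alpha * (#|s u|%:R + 1) by rewrite ler_wpM2l // ltW.
lra.
Qed.

Definition far u w x := ((dist w x + 2 <= dist u x) || (dist u x + 2 <= dist w x))%N.

Lemma card_far_le u w : #|[set x | far u w x]|%:R <= 2 * alpha.
Proof.
have [->|uw] := eqVneq u w.
  have -> : [set x | far w w x] = set0 by apply/setP => x; rewrite !inE /far; lia.
  by rewrite cards0 mulr0n mulr_ge0 // ltW.
have -> : [set x | far u w x] =
    [set x | (dist w x + 2 <= dist u x)%N] :|: [set x | (dist u x + 2 <= dist w x)%N].
  by apply/setP => x; rewrite !inE.
apply: le_trans (_ : (#|[set x | (dist w x + 2 <= dist u x)%N]| +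
                      #|[set x | (dist u x + 2 <= dist w x)%N]|)%:R <= _).
  by rewrite ler_nat leq_card_setU.
by rewrite natrD mulr2n mulrDl mul1r lerD // card_shortcut_le // eq_sym.
Qed.

Lemma mem_dist_layers k r u y :
  (y \in \bigcup_(i < k) Aset (Gs s) (r + i) u) = (r <= dist u y < r + k)%N.
Proof.
apply/bigcupP/idP => [[i _]|/andP [r_le lt_rk]].
  by rewrite inE gdist_dist => /eqP [->]; rewrite leq_addr ltn_add2l ltn_ord.
have i_lt : (dist u y - r < k)%N by lia.
by exists (Ordinal i_lt); rewrite // inE gdist_dist /= subnKC.
Qed.

Lemma nash_layers_bound : exists r, forall u,
  n%:R - 4 * alpha <= 5 * (\max_(i < 5) #|Aset (Gs s) (r + i) u|)%N%:R.
Proof.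
have [x0 _|no_vertex] := pickP (@predT 'I_n); last first.
  by exists 0%N => u; have := no_vertex u.
have [z z_center] := exists_column_card_le (P := far x0) x0 (card_far_le x0).
exists (dist z x0 - 2)%N => u.
set W := \bigcup_(i < 5) Aset (Gs s) (dist z x0 - 2 + i) u.
have W_le : (#|W| <= 5 * \max_(i < 5) #|Aset (Gs s) (dist z x0 - 2 + i) u|)%N.
  exact: leq_card_layers.
have W_compl : ~: W \subset [set y | far x0 y z] :|: [set y | far u z y].
  apply/subsetP => y; rewrite !inE mem_dist_layers /far.
  by rewrite (dist_sym x0 z) (dist_sym y z); lia.
have compl_le : #|~: W|%:R <= 4 * alpha.
  apply: le_trans (_ : (#|[set y | far x0 y z]| + #|[set y | far u z y]|)%:R <= _).
    by rewrite ler_nat (leq_trans (subset_leq_card W_compl)) ?leq_card_setU.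
  by rewrite natrD; have := card_far_le u z; lra.
have := cardsC W; rewrite card_ord => n_split.
have : (n <= 5 * \max_(i < 5) #|Aset (Gs s) (dist z x0 - 2 + i) u| + #|~: W|)%N by lia.
rewrite -(ler_nat R) natrD natrM; lra.
Qed.

End NashEquilibrium.

Theorem proposition9 (R : realType) (C : R) (hC : 4 < C)
  (n : nat) (alpha : R) (halpha : 0 < alpha) (hlt : alpha < n%:R / C)
  (s : profile n) (hs : valid_profile s) (hNE : nash_eq alpha s) :
  dist_almost_uniform (Gs s) 5 (4 / 5 * (1 + 1 / C)).
Proof.
have [r layers_bound] := nash_layers_bound hs hNE halpha.
exists r => u; have := layers_bound u.
have C_gt0 : 0 < C by lra.
have -> : n%:R * (1 - 4 / 5 * (1 + 1 / C)) = (n%:R - 4 * (n%:R / C)) / 5.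
  by field; rewrite gt_eqF.
lra.
Qed.
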